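(* Let $d, s, t, \ell$ be integers with $s\ge 1$, $\ell \ge 0$, $d \geq t-1$ and $t \geq \max\{5, \ell+4\}$. Then for every $\theta_{t,\ell}\in\Theta_{t,\ell}$, \[ \mathrm{rb}(W_d, \theta_{t,\ell}) \ge \left\lfloor \frac{2t-7}{t-3}\, d \right\rfloor + 1, \] and furthermore, if ($s = 2$ and $t \geq 6$) or ($s \geq 3$ and $t \geq 7$), then \[ \mathrm{rb}(W_d(s), F_t) \ge \left\lfloor \frac{(s+1)t-(3s+4)}{t-3}\, d \right\rfloor + 1 . \]
   Context: A subgraph of an edge-colored graph is rainbow if no two of its edges have the same color. For graphs $G$ and $H$, the rainbow number $\mathrm{rb}(G,H)$ is the minimum integer $k$ such that every edge-coloring of $G$ that uses at least $k$ distinct colors contains a rainbow subgraph isomorphic to $H$. For $d \ge 3$ and $s \ge 1$, $W_d(s) = \overline{K_s} + C_d$: hub vertices $u_1,\dots,u_s$, pairwise non-adjacent, each adjacent to every vertex of a cycle $v_1v_2\cdots v_dv_1$; $W_d := W_d(1)$. The fan $F_t$ is obtained from a cycle $v_1v_2\cdots v_tv_1$ by adding all chords $v_1v_i$, $3 \le i \le t-1$. For $0 \le \ell \le t-3$, $\Theta_{t,\ell}$ is the class of graphs obtained from a cycle $v_1v_2\cdots v_tv_1$ by adding exactly $\ell$ chords, each from $\{v_1v_i : 3 \le i \le t-1\}$. *)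

From mathcomp Require Import all_boot.
From mathcomp Require Import boolp.
Set Implicit Arguments. Unset Strict Implicit. Unset Printing Implicit Defensive.

(* A simple graph on a finite vertex type V is given by a symmetric,
   irreflexive adjacency relation g : rel V. *)

Definition edge_coloring (V : finType) (g : rel V) (c : V -> V -> nat) : Prop :=
  forall x y, g x y -> c x y = c y x.

Definition ncolors (V : finType) (g : rel V) (c : V -> V -> nat) : nat :=
  size (undup [seq c p.1 p.2 | p <- enum [pred p : V * V | g p.1 p.2]]).

Definition rainbow_copy (V W : finType) (g : rel V) (h : rel W)
    (c : V -> V -> nat) : Prop :=
  exists f : W -> V,
    [/\ injective f,
        (forall a b, h a b -> g (f a) (f b)) &
        (forall a b a' b', h a b -> h a' b' ->
           c (f a) (f b) = c (f a') (f b') ->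
           (a = a' /\ b = b') \/ (a = b' /\ b = a'))].

Definition rb_forces (V W : finType) (g : rel V) (h : rel W) (k : nat) : Prop :=
  forall c, edge_coloring g c -> k <= ncolors g c -> rainbow_copy g h c.

Lemma ncolors_le (V : finType) (g : rel V) c : ncolors g c <= #|{: V * V}|.
Proof.
rewrite /ncolors; apply: leq_trans (size_undup _) _.
by rewrite size_map -cardE max_card.
Qed.

Lemma rb_ex (V W : finType) (g : rel V) (h : rel W) :
  exists k, `[< rb_forces g h k >].
Proof.
exists #|{: V * V}|.+1; apply/asboolP => c _ H.
by have := leq_trans H (ncolors_le g c); rewrite ltnn.
Qed.

Definition rb (V W : finType) (g : rel V) (h : rel W) : nat :=
  ex_minn (rb_ex g h).

(* W_d(s) = complement(K_s) + C_d on vertices 'I_s (hubs) + 'I_d (cycle). *)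
Definition wheel_adj (s d : nat) : rel ('I_s + 'I_d) :=
  fun x y =>
    match x, y with
    | inl _, inr _ => true
    | inr _, inl _ => true
    | inr i, inr j => (i.+1 %% d == j) || (j.+1 %% d == i)
    | inl _, inl _ => false
    end.

(* Cycle v_1 ... v_t (vertex v_i is index i-1 in 'I_t) plus chords v_1 v_i
   for the indices in S. *)
Definition theta_adj (t : nat) (S : {set 'I_t}) : rel 'I_t :=
  fun i j => [|| (i.+1 %% t == j), (j.+1 %% t == i),
                 (i == 0 :> nat) && (j \in S) | (j == 0 :> nat) && (i \in S)].

(* Allowed chord endpoints: v_3, ..., v_{t-1}, i.e. indices 2 .. t-2. *)
Definition chord_set (t : nat) : {set 'I_t} := [set i : 'I_t | 2 <= i <= t - 2].

Definition in_Theta (t : nat) (l : nat) (S : {set 'I_t}) : Prop :=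
  S \subset chord_set t /\ #|S| = l.

Definition fan_adj (t : nat) : rel 'I_t := theta_adj (chord_set t).
Arguments in_Theta t l S : clear implicits.
Arguments fan_adj t : clear implicits.
Arguments wheel_adj s d : clear implicits.
Arguments rb V W g h : clear implicits.

From mathcomp Require Import all_boot zify boolp.
Set Implicit Arguments. Unset Strict Implicit. Unset Printing Implicit Defensive.

(* Colour each spoke of W_d(s) with a colour of its own and the rim edge
   v_i v_(i+1) with colour i, except that an edge starting at a multiple of
   p = t - 3 repeats the colour of the edge before it.  This uses
   s d + d - ceil(d / p) colours, at least the claimed bound.  A copy of a
   theta graph in W_d has at most one vertex on the hub, and a copy of F_t in
   W_d(s) has its centre on a hub (otherwise the path of its t - 1 outer
   vertices would alternate between hubs and the two rim neighbours of the
   centre).  Either way t - 1 cyclically consecutive vertices of the t-cycle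
   lie on the rim and run along p + 1 consecutive rim edges, two adjacent ones
   of which share a colour. *)

Lemma rb_gt (V W : finType) (g : rel V) (h : rel W) (c : V -> V -> nat) N :
  edge_coloring g c -> N <= ncolors g c -> ~ rainbow_copy g h c -> N < rb V W g h.
Proof.
move=> gc Nc no_rb; rewrite /rb; case: ex_minnP => m /asboolP rb_m _.
by rewrite ltnNge; apply/negP => mN; apply/no_rb/rb_m/(leq_trans mN).
Qed.

Lemma ndvdn_succ p n : 1 < p -> p %| n -> ~~ (p %| n.+1).
Proof. by move=> p1 pn; rewrite -addn1 dvdn_addr // dvdn1 neq_ltn p1 orbT. Qed.

Lemma succ_modE d a b : a < d -> b < d ->
  (a.+1 %% d == b) = (a.+1 == b) || (a.+1 == d) && (b == 0).
Proof.
move=> ad bd; have [->|ne] := eqVneq a.+1 d; first by rewrite modnn (gtn_eqF bd) eq_sym.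
by rewrite modn_small ?(negbTE ne) ?orbF // ltn_neqAle ne.
Qed.

Lemma modn_succ_mod x d : (x %% d).+1 %% d = x.+1 %% d.
Proof. by rewrite -addn1 modnDml addn1. Qed.

Lemma succ_walkE d m (g : nat -> nat) : g 0 < d ->
  (forall k, k < m -> (g k).+1 %% d = g k.+1) ->
  forall k, k <= m -> g k = (g 0 + k) %% d.
Proof.
move=> g0 up; elim=> [|k IH] km; first by rewrite addn0 modn_small.
by rewrite -up // IH ?modn_succ_mod ?addnS // ltnW.
Qed.

Lemma dvdn_window d p x : 0 < p -> p < d -> x < d ->
  exists2 k, 0 < k <= p & p %| (x + k) %% d.
Proof.
move=> p0 pd xd; have [xp_d|d_xp] := ltnP (x + p) d.
- have r_lt : x %% p < p := ltn_pmod x p0.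
  exists (p - x %% p); first by rewrite subn_gt0 r_lt leq_subr.
  rewrite modn_small; last by apply: leq_ltn_trans xp_d; rewrite leq_add2l leq_subr.
  rewrite [in X in X + _](divn_eq x p) -addnA subnKC; last exact: ltnW.
  by rewrite dvdn_addr ?dvdn_mull.
- exists (d - x); first by rewrite subn_gt0 xd leq_subLR.
  by rewrite subnKC ?modnn ?dvdn0 // ltnW.
Qed.

Definition rim_adj d (a b : nat) := (a.+1 %% d == b) || (b.+1 %% d == a).

Definition rim_pred d i := (i + d).-1 %% d.

Lemma rim_pred_succ d a : a < d -> rim_pred d (a.+1 %% d) = a.
Proof.
move=> ad; have d0 : 0 < d := leq_ltn_trans (leq0n a) ad.
rewrite /rim_pred -subn1 -addnBA // modnDml addSn -addnS subn1 prednK //.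
by rewrite modnDr modn_small.
Qed.

Lemma rim_pred_pos d a : 0 < a -> a < d -> rim_pred d a = a.-1.
Proof.
move=> a0 ad; rewrite /rim_pred -(prednK a0) addSn /= modnDr.
by rewrite modn_small // (leq_ltn_trans (leq_pred a) ad).
Qed.

(* The colour of the rim edge from i to i + 1: an edge starting at a multiple
   of p inherits the colour of the previous edge, or of the one before that
   if the previous edge starts at a multiple of p too (this happens only for
   i = 0 when p divides d - 1).  The colours used are exactly the i < d with
   ~~ (p %| i), yet every p + 1 consecutive rim edges contain two adjacent
   edges of the same colour. *)
Definition rim_color d p i :=
  if p %| i then
    if p %| rim_pred d i then rim_pred d (rim_pred d i) else rim_pred d i
  else i.

Definition rim_edge_color d p a b :=
  rim_color d p (if a.+1 %% d == b then a else b).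

Lemma rim_color_succ d p a : 1 < p -> 2 < d -> a < d -> p %| a.+1 %% d ->
  rim_color d p a = rim_color d p (a.+1 %% d).
Proof.
move=> p1 d2 ad pb; rewrite [in RHS]/rim_color pb rim_pred_succ //.
rewrite /rim_color; case pa: (p %| a) => //.
suff /negbTE -> : ~~ (p %| rim_pred d a) by [].
have [lt_ad|ad1] : a.+1 < d \/ a.+1 = d by lia.
  by move: pb; rewrite modn_small // (negbTE (ndvdn_succ p1 pa)).
rewrite rim_pred_pos; try lia.
by apply/negP => /(ndvdn_succ p1); rewrite prednK ?pa //; lia.
Qed.

Lemma rim_edge_color_succ d p a : rim_edge_color d p a (a.+1 %% d) = rim_color d p a.
Proof. by rewrite /rim_edge_color eqxx. Qed.

Lemma rim_edge_colorC d p a b : 2 < d -> a < d -> b < d -> rim_adj d a b ->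
  rim_edge_color d p a b = rim_edge_color d p b a.
Proof.
move=> d2 ad bd; rewrite /rim_adj /rim_edge_color.
case: eqP => [ab|_]; case: eqP => [ba|_] //= _.
by move/eqP: ab; move/eqP: ba; rewrite !succ_modE //; lia.
Qed.

Lemma rim_up_walk_repeat d p (g : nat -> nat) : 1 < p -> p.+1 < d -> g 0 < d ->
  (forall k, k < p.+1 -> (g k).+1 %% d = g k.+1) ->
  exists2 k, 0 < k < p.+1 &
    rim_edge_color d p (g k.-1) (g k) = rim_edge_color d p (g k) (g k.+1).
Proof.
move=> p1 pd g0 up; have gE := succ_walkE g0 up.
have d0 : 0 < d := leq_ltn_trans (leq0n _) g0.
have [k /andP[k0 kp] pk] := dvdn_window (ltnW p1) (ltnW pd) g0.
exists k; first by rewrite k0 ltnS.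
have gk : g k = (g k.-1).+1 %% d by rewrite up ?prednK //; lia.
rewrite -up ?ltnS // [in LHS]gk !rim_edge_color_succ gk.
apply: rim_color_succ => //; first by lia.
  by rewrite gE ?ltn_pmod //; lia.
by rewrite -gk gE // ltnW.
Qed.

Lemma rim_walk_monotone d m (g : nat -> nat) : 2 < d ->
  (forall k, k <= m -> g k < d) ->
  (forall k, k < m -> rim_adj d (g k) (g k.+1)) ->
  (forall k, k.+1 < m -> g k <> g k.+2) ->
  (forall k, k < m -> (g k).+1 %% d = g k.+1) \/
  (forall k, k < m -> (g k.+1).+1 %% d = g k).
Proof.
move=> d2 lt_d adj skip.
have step k : k.+1 < m ->
    ((g k).+1 %% d = g k.+1 -> (g k.+1).+1 %% d = g k.+2) /\
    ((g k.+1).+1 %% d = g k -> (g k.+2).+1 %% d = g k.+1).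
  move=> km; have b0 := lt_d k (ltnW (ltnW km)).
  have b1 := lt_d k.+1 (ltnW km); have b2 := lt_d k.+2 km.
  move: (adj _ km) (adj _ (ltnW km)) (skip _ km).
  rewrite /rim_adj !succ_modE // => A B C.
  by split=> /eqP; rewrite succ_modE // => D; apply/eqP; rewrite succ_modE //; lia.
have [->|m0] := posnP m; first by left.
have /orP[/eqP up0|/eqP down0] := adj 0 m0; [left|right].
- by elim=> [//|k IH] km; apply: (step k km).1 (IH (ltnW km)).
- by elim=> [//|k IH] km; apply: (step k km).2 (IH (ltnW km)).
Qed.

Lemma rim_walk_repeat d p (g : nat -> nat) : 1 < p -> p.+1 < d ->
  (forall k, k <= p.+1 -> g k < d) ->
  (forall k, k < p.+1 -> rim_adj d (g k) (g k.+1)) ->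
  (forall k, k < p -> g k <> g k.+2) ->
  exists2 k, 0 < k < p.+1 &
    rim_edge_color d p (g k.-1) (g k) = rim_edge_color d p (g k) (g k.+1).
Proof.
move=> p1 pd lt_d adj skip; have d2 : 2 < d by lia.
have [up|down] := rim_walk_monotone d2 lt_d adj skip.
  exact: rim_up_walk_repeat (lt_d 0 _) up.
have up_rev k : k < p.+1 -> (g (p.+1 - k)).+1 %% d = g (p.+1 - k.+1).
  by rewrite ltnS => kp; rewrite subSS (subSn kp) down // ltnS leq_subr.
have [k /andP[k0 kp]] := @rim_up_walk_repeat d p (fun k => g (p.+1 - k)) p1 pd
  (lt_d _ (leq_subr 0 _)) up_rev.
rewrite (_ : p.+1 - k.-1 = (p.+1 - k).+1); last by lia.
rewrite (_ : p.+1 - k.+1 = (p.+1 - k).-1); last by lia.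
move=> e; exists (p.+1 - k); first by lia.
have : 0 < p.+1 - k < p.+1 by lia.
move: (p.+1 - k) e => j e /andP[j0 jp].
have adj1 : rim_adj d (g j.-1) (g j) by rewrite -{2}(prednK j0) adj // prednK // ltnW.
have [b0 b1 b2] : [/\ g j.-1 < d, g j < d & g j.+1 < d] by split; apply: lt_d; lia.
by rewrite rim_edge_colorC // -e; apply/esym/rim_edge_colorC => //; apply: adj.
Qed.

(* Spokes get pairwise distinct colours, all of them larger than the rim
   colours, which are < d. *)
Definition wheel_color s d p (x y : 'I_s + 'I_d) : nat :=
  match x, y with
  | inl h, inr i | inr i, inl h => d + (h * d + i)
  | inr i, inr j => rim_edge_color d p i j
  | inl _, inl _ => 0
  end.
Arguments wheel_color : clear implicits.

Lemma wheel_color_edge_coloring s d p : 2 < d ->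
  edge_coloring (wheel_adj s d) (wheel_color s d p).
Proof. by move=> d2 [h|x] [h'|y] //= xy; apply: rim_edge_colorC. Qed.

Lemma count_dvdn_iota p n : 0 < p -> count (dvdn p) (iota 0 n.+1) = (n %/ p).+1.
Proof.
move=> p0; elim: n => [|n IH]; first by rewrite /= dvdn0 div0n.
rewrite -addn1 iotaD count_cat IH /= addn0 add0n (divnS _ p0).
by case: (p %| n.+1); rewrite /= ?addn1 ?addn0.
Qed.

Lemma ncolors_wheel_color s d p : 0 < d ->
  s * d + count (predC (dvdn p)) (iota 0 d)
    <= ncolors (wheel_adj s d) (wheel_color s d p).
Proof.
move=> d0; rewrite -size_filter -[s * d](size_iota 0) -(size_map (addn d)) -size_cat.
rewrite /ncolors; apply: uniq_leq_size => [|c].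
  rewrite cat_uniq map_inj_uniq ?iota_uniq ?filter_uniq ?iota_uniq //=; last exact: addnI.
  rewrite andbT; apply/hasPn => v; rewrite mem_filter mem_iota => /andP[_ vd].
  by apply/negP => /mapP [n _ e]; move: vd; rewrite e add0n ltnNge leq_addr.
rewrite mem_cat mem_undup => /orP[/mapP [n]|].
  rewrite mem_iota add0n => nlt ->.
  have hs : n %/ d < s by rewrite ltn_divLR.
  apply/mapP; exists (inl (Ordinal hs), inr (Ordinal (ltn_pmod n d0))).
    by rewrite mem_enum.
  by rewrite /= -divn_eq.
rewrite mem_filter mem_iota add0n => /andP[np cd].
apply/mapP; exists (inr (Ordinal cd), inr (Ordinal (ltn_pmod c.+1 d0))).
  by rewrite mem_enum inE /= eqxx.
by rewrite /= rim_edge_color_succ /rim_color (negbTE np).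
Qed.

Lemma wheel_color_count s d t : 3 < t -> 0 < d ->
  ((s + 1) * t - (3 * s + 4)) * d %/ (t - 3)
    <= ncolors (wheel_adj s d) (wheel_color s d (t - 3)).
Proof.
move=> t3 d0; apply: leq_trans (ncolors_wheel_color s (t - 3) d0).
have p0 : 0 < t - 3 by rewrite subn_gt0.
have cnt_dvd : count (dvdn (t - 3)) (iota 0 d) = (d.-1 %/ (t - 3)).+1.
  by rewrite -{1}(prednK d0) count_dvdn_iota.
have := count_predC (dvdn (t - 3)) (iota 0 d); rewrite cnt_dvd size_iota.
rewrite -ltnS ltn_divLR //.
have := leq_divM d.-1 (t - 3); have := leq_div d.-1 (t - 3).
move: (d.-1 %/ (t - 3)) => c c_le cp_le cnt.
have -> : (s + 1) * t - (3 * s + 4) = s * (t - 3) + (t - 3) - 1 by nia.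
nia.
Qed.

Definition on_rim s d (v : 'I_s + 'I_d) := if v is inr _ then true else false.

Lemma wheel_adj_hub s d (h : 'I_s) (v : 'I_s + 'I_d) :
  wheel_adj s d (inl h) v = on_rim v.
Proof. by case: v. Qed.

Definition all_but_one_on_rim s d t (f : 'I_t -> 'I_s + 'I_d) :=
  exists c, forall j, j != c -> on_rim (f j).

Section CyclicIndex.

Variables (t : nat) (t_gt0 : 0 < t).

Definition cyc j : 'I_t := Ordinal (ltn_pmod j t_gt0).

Lemma cyc_eq i j : (cyc i == cyc j) = (i == j %[mod t]).
Proof. by []. Qed.

Lemma cyc_ord (i : 'I_t) : cyc i = i.
Proof. by apply: val_inj; rewrite /= modn_small. Qed.

Lemma theta_adj_cyc (S : {set 'I_t}) j : theta_adj S (cyc j) (cyc j.+1).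
Proof. by rewrite /theta_adj /= modn_succ_mod eqxx. Qed.

End CyclicIndex.

Lemma wheel_color_no_rainbow s d t (S : {set 'I_t}) : 4 < t -> t - 1 <= d ->
  (forall f : 'I_t -> 'I_s + 'I_d, injective f ->
     (forall a b, theta_adj S a b -> wheel_adj s d (f a) (f b)) ->
     all_but_one_on_rim f) ->
  ~ rainbow_copy (wheel_adj s d) (theta_adj S) (wheel_color s d (t - 3)).
Proof.
move=> t4 td run [f [f_inj f_adj f_rb]]; have [c rim] := run f f_inj f_adj.
have t0 : 0 < t by lia.
have d0 : 0 < d by lia.
pose J k := cyc t0 (c + k.+1).
have J_eq i j : i.+1 < t -> j.+1 < t -> (J i == J j) = (i == j).
  by move=> it jt; rewrite cyc_eq eqn_modDl !modn_small.
have J_adj k : theta_adj S (J k) (J k.+1) by rewrite /J [c + k.+2]addnS; apply: theta_adj_cyc.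
pose y k : 'I_d := if f (J k) is inr z then z else Ordinal d0.
have fJ k : k.+1 < t -> f (J k) = inr (y k).
  move=> kt; rewrite /y; case E: (f (J k)) => [h|//].
  suff /rim : J k != c by rewrite E.
  rewrite -[c in _ != c](cyc_ord t0) -[val c]addn0.
  by rewrite cyc_eq eqn_modDl mod0n modn_small.
have [k /andP[k0 kp] same] : exists2 k, 0 < k < (t - 3).+1 &
    rim_edge_color d (t - 3) (y k.-1) (y k) = rim_edge_color d (t - 3) (y k) (y k.+1).
  apply: rim_walk_repeat => [||k _|k kt|k kt]; try lia.
  - exact: ltn_ord.
  - by have := f_adj _ _ (J_adj k); rewrite !fJ //; lia.
  - move=> /val_inj e; suff: J k = J k.+2 by move/eqP; rewrite J_eq; lia.
    by apply: f_inj; rewrite !fJ ?e //; lia.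
have J_adj' : theta_adj S (J k.-1) (J k) by rewrite -[in J k](prednK k0).
have := f_rb _ _ _ _ J_adj' (J_adj k).
rewrite !fJ /=; try lia.
move=> /(_ same) [[/eqP + _]|[/eqP + _]]; rewrite J_eq; lia.
Qed.

Lemma rb_wheel_theta_gt s d t (S : {set 'I_t}) : 4 < t -> t - 1 <= d ->
  (forall f : 'I_t -> 'I_s + 'I_d, injective f ->
     (forall a b, theta_adj S a b -> wheel_adj s d (f a) (f b)) ->
     all_but_one_on_rim f) ->
  ((s + 1) * t - (3 * s + 4)) * d %/ (t - 3) < rb _ _ (wheel_adj s d) (theta_adj S).
Proof.
move=> t4 td run; apply: (@rb_gt _ _ _ _ (wheel_color s d (t - 3))).
- by apply: wheel_color_edge_coloring; lia.
- by apply: wheel_color_count; lia.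
- exact: wheel_color_no_rainbow.
Qed.

Lemma one_hub_all_but_one_on_rim d t (f : 'I_t -> 'I_1 + 'I_d) : 0 < t -> injective f ->
  all_but_one_on_rim f.
Proof.
move=> t0 f_inj; case: (pickP (fun j => ~~ on_rim (f j))) => [c hub_c|all_rim].
  exists c => j jc; apply/negPn/negP => hub_j; move/eqP: jc; apply; apply: f_inj.
  case: (f j) hub_j => // h _; case: (f c) hub_c => // h' _.
  by rewrite (ord1 h) (ord1 h').
by exists (Ordinal t0) => j _; apply/negbFE/all_rim.
Qed.

Lemma fan_adj_center t (i j : 'I_t) : 2 < t -> i = 0 :> nat -> 0 < j -> fan_adj t i j.
Proof.
move=> t2 i0 j0; have jt := ltn_ord j.
rewrite /fan_adj /theta_adj /chord_set inE i0 eqxx (gtn_eqF j0) /= orbF.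
by rewrite modn_small ?succ_modE //; lia.
Qed.

Lemma rim_nbrs_alternate s d (x : 'I_d) (u v : 'I_s + 'I_d) : 4 < d ->
  wheel_adj s d (inr x) u -> wheel_adj s d (inr x) v -> wheel_adj s d u v ->
  on_rim u = ~~ on_rim v.
Proof.
move=> d4; case: u v => [h|a] [h'|b] //=.
have := ltn_ord x; have := ltn_ord a; have := ltn_ord b.
by rewrite !succ_modE //; lia.
Qed.

Lemma rim_three_nbrs s d (x : 'I_d) (u v w : 'I_s + 'I_d) : 2 < d ->
  on_rim u -> on_rim v -> on_rim w ->
  wheel_adj s d (inr x) u -> wheel_adj s d (inr x) v -> wheel_adj s d (inr x) w ->
  u != v -> u != w -> v != w -> False.
Proof.
move=> d2; case: u v w => [//|a] [//|b] [//|c] /= _ _ _.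
rewrite !(inj_eq inr_inj) -!val_eqE /=.
have := ltn_ord x; have := ltn_ord a; have := ltn_ord b; have := ltn_ord c.
by rewrite !succ_modE //; lia.
Qed.

Lemma two_hubs_three d (u v w : 'I_2 + 'I_d) :
  ~~ on_rim u -> ~~ on_rim v -> ~~ on_rim w -> u != v -> u != w -> v != w -> False.
Proof.
case: u v w => [a|//] [b|//] [c|//] /= _ _ _.
rewrite !(inj_eq inl_inj) -!val_eqE /=.
by have := ltn_ord a; have := ltn_ord b; have := ltn_ord c; lia.
Qed.

Lemma fan_center_on_hub s d t (f : 'I_t -> 'I_s + 'I_d) (c : 'I_t) :
  (s = 2 /\ 5 < t) \/ (2 < s /\ 6 < t) -> t - 1 <= d -> injective f ->
  (forall a b, fan_adj t a b -> wheel_adj s d (f a) (f b)) -> c = 0 :> nat ->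
  ~~ on_rim (f c).
Proof.
move=> hs td f_inj f_adj c0; have t0 : 0 < t by lia.
case Ec: (f c) => [//|x] /=; exfalso.
pose u j := f (cyc t0 j).
have u_neq i j : i < j < t -> u i != u j.
  move=> ijt; apply/negP => /eqP /f_inj /eqP; rewrite cyc_eq !modn_small; lia.
have nbr j : 0 < j < t -> wheel_adj s d (inr x) (u j).
  move=> jt; rewrite -Ec; apply: f_adj; apply: fan_adj_center => //=; try lia.
  by rewrite modn_small; lia.
have alt j : 0 < j -> j.+1 < t -> on_rim (u j) = ~~ on_rim (u j.+1).
  move=> j0 jt; apply: (rim_nbrs_alternate _ (nbr j _) (nbr j.+1 _)); try lia.
  exact: f_adj (theta_adj_cyc _ _ _).
have alt2 j : 0 < j -> j.+2 < t -> on_rim (u j.+2) = on_rim (u j).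
  by move=> j0 jt; rewrite (alt j) ?(alt j.+1) ?negbK //; lia.
have rim_three i : 0 < i -> i.+4 < t -> on_rim (u i) -> False.
  move=> i0 it ri; have ri2 : on_rim (u i.+2) by rewrite alt2 //; lia.
  have ri4 : on_rim (u i.+4) by rewrite alt2 ?alt2 //; lia.
  by apply: (rim_three_nbrs _ ri ri2 ri4 (nbr _ _) (nbr _ _) (nbr _ _));
    rewrite ?u_neq //; lia.
case r1: (on_rim (u 1)); first by apply: (rim_three 1); rewrite ?r1 //; lia.
case: hs => [[s2 t5]|[s2 t6]]; last first.
  apply: (rim_three 2); try lia.
  by apply/negbFE; rewrite -(alt 1) ?r1 //; lia.
subst s; apply: (two_hubs_three (u := u 1) (v := u 3) (w := u 5)); rewrite ?u_neq //;
  try lia; rewrite ?alt2 ?r1 //; lia.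
Qed.

Lemma fan_all_but_one_on_rim s d t (f : 'I_t -> 'I_s + 'I_d) :
  (s = 2 /\ 5 < t) \/ (2 < s /\ 6 < t) -> t - 1 <= d -> injective f ->
  (forall a b, fan_adj t a b -> wheel_adj s d (f a) (f b)) ->
  all_but_one_on_rim f.
Proof.
move=> hs td f_inj f_adj; have t0 : 0 < t by lia.
pose c := Ordinal t0; exists c => j jc.
have j0 : 0 < j.
  by rewrite lt0n; move: jc; apply: contra => /eqP j0; apply/eqP/val_inj.
have := f_adj _ _ (@fan_adj_center t c j ltac:(lia) erefl j0).
have := fan_center_on_hub (c := c) hs td f_inj f_adj erefl.
by case: (f c) => // h _; rewrite wheel_adj_hub.
Qed.

Theorem theorem4p2 (d s t l : nat) :
  1 <= s -> t - 1 <= d -> 5 <= t -> l + 4 <= t ->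
  (forall S : {set 'I_t}, in_Theta t l S ->
     ((2 * t - 7) * d %/ (t - 3)).+1 <= rb _ _ (wheel_adj 1 d) (theta_adj S)) /\
  ((s = 2 /\ 6 <= t) \/ (3 <= s /\ 7 <= t) ->
     (((s + 1) * t - (3 * s + 4)) * d %/ (t - 3)).+1
       <= rb _ _ (wheel_adj s d) (fan_adj t)).
Proof.
move=> _ td t5 _; split=> [S _ | hs].
  rewrite (_ : 2 * t - 7 = (1 + 1) * t - (3 * 1 + 4)); last by lia.
  apply: rb_wheel_theta_gt => // f f_inj _.
  by apply: one_hub_all_but_one_on_rim f_inj; lia.
apply: rb_wheel_theta_gt => // f f_inj f_adj.
exact: fan_all_but_one_on_rim f_inj f_adj.
Qed.
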